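(* Let $g$ be a positive integer and $\Gamma=\langle 2,2g+1\rangle$ (the numerical semigroup generated by $2$ and $2g+1$). For every integer $k\ge0$, \[ \delta^1_\Gamma(2g+2+k)=\delta^2_\Gamma(2g+k). \]
   Context: For a numerical semigroup $\Gamma$: $D_\Gamma(x)=\{s\in\Gamma:x-s\in\Gamma\}$, $\delta^1_\Gamma(m)=\min\{|D_\Gamma(m_1)|: m\le m_1\in\Gamma\}$, and $\delta^2_\Gamma(m)=\min\{|D_\Gamma(m_1)\cup D_\Gamma(m_2)|: m\le m_1<m_2,\ m_1,m_2\in\Gamma\}$. *)

From mathcomp Require Import all_boot.
From Stdlib Require Import ClassicalEpsilon.
Set Implicit Arguments. Unset Strict Implicit. Unset Printing Implicit Defensive.

(* Membership in the numerical semigroup <2, 2g+1>: x = 2a + (2g+1)b for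
   some a, b in N (the witnesses are necessarily <= x). *)
Definition inGamma (g : nat) : pred nat :=
  fun x => [exists a : 'I_x.+1, exists b : 'I_x.+1, x == 2 * a + (2 * g + 1) * b].

(* D_Gamma(x) = { s in Gamma : x - s in Gamma }, listed without repetition
   (s ranges over 0..x, since x - s must lie in Gamma, a subset of N). *)
Definition Dset (G : pred nat) (x : nat) : seq nat :=
  [seq s <- iota 0 x.+1 | G s && G (x - s)].

Definition asb (P : Prop) : bool :=
  if excluded_middle_informative P then true else false.

(* The minimum of a set of naturals given as a predicate (0 if empty). *)
Definition natmin (P : nat -> Prop) : nat :=
  match excluded_middle_informative (exists n, P n) with
  | left h =>
      @ex_minn (fun n => asb (P n))
        (let: ex_intro n Hn := h in
         ex_intro _ n (match excluded_middle_informative (P n) as b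
                        return (if b then true else false) with
                       | left _ => erefl true
                       | right hn => False_ind _ (hn Hn) end))
  | right _ => 0
  end.

Definition delta1 (G : pred nat) (m : nat) : nat :=
  natmin (fun n => exists m1, m <= m1 /\ G m1 /\ size (Dset G m1) = n).

Definition delta2 (G : pred nat) (m : nat) : nat :=
  natmin (fun n => exists m1 m2, m <= m1 /\ m1 < m2 /\ G m1 /\ G m2 /\
                     size (undup (Dset G m1 ++ Dset G m2)) = n).

(* Let G be a numerical semigroup containing 2 and m at least its conductor.
   Since G + 2 is contained in G, D(x) is contained in D(x + 2), so the pair
   (m1 - 2, m1) realises |D(m1)| as a two-set union: delta2(m) <= delta1(m + 2).
   Conversely, a union D(m1) u D(m2) with m2 >= m + 2 already contains D(m2);
   the only other pair is (m, m + 1), and there D(m + 2) \ {m + 2} lies in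
   D(m) u D(m + 1) while missing m + 1 (as 1 is not in G), so
   |D(m + 2)| <= |D(m) u D(m + 1)|. For <2, 2g+1> the conductor is 2g. *)
From Stdlib Require Import ClassicalEpsilon.
From mathcomp Require Import all_boot zify.

Lemma asbP (P : Prop) : reflect P (asb P).
Proof. by rewrite /asb; case: excluded_middle_informative; constructor. Qed.

Lemma natminP {P : nat -> Prop} : (exists n, P n) ->
  P (natmin P) /\ forall n, P n -> natmin P <= n.
Proof.
move=> exP; rewrite /natmin; case: excluded_middle_informative => [_exP|//].
case: ex_minnP => n /asbP Pn min_n; split=> // n' Pn'.
by apply/min_n/asbP.
Qed.

Lemma natmin_eq (P Q : nat -> Prop) :
  (forall n, P n -> exists2 n', Q n' & n' <= n) ->
  (forall n, Q n -> exists2 n', P n' & n' <= n) -> natmin P = natmin Q.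
Proof.
move=> PQ QP.
case: (excluded_middle_informative (exists n, P n)) => [[n Pn]|noP].
- have [n' Qn' _] := PQ n Pn.
  have [/PQ [p Qp le_p] minP] := natminP (ex_intro P n Pn).
  have [/QP [q Pq le_q] minQ] := natminP (ex_intro Q n' Qn').
  by apply/eqP; rewrite eqn_leq (leq_trans (minP _ Pq)) ?(leq_trans (minQ _ Qp)).
- have noQ : ~ exists n, Q n by case=> n /QP [n' Pn' _]; apply: noP; exists n'.
  rewrite /natmin; case: excluded_middle_informative => [//|_].
  by case: excluded_middle_informative.
Qed.

Lemma mem_Dset (G : pred nat) x s :
  (s \in Dset G x) = [&& s <= x, G s & G (x - s)].
Proof. by rewrite mem_filter mem_iota add0n ltnS /= andbC. Qed.

Lemma Dset_uniq (G : pred nat) x : uniq (Dset G x).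
Proof. by rewrite filter_uniq ?iota_uniq. Qed.

Section SemigroupWithTwo.

Variable G : pred nat.
Hypotheses (G0 : G 0) (G2 : G 2) (notG1 : ~~ G 1).
Hypothesis G_add : forall x y, G x -> G y -> G (x + y).

Lemma G_even x : ~~ odd x -> G x.
Proof.
move=> even_x; rewrite -(odd_double_half x) (negbTE even_x) add0n.
by elim: x./2 => // n IHn; rewrite doubleS -addn2 G_add.
Qed.

Lemma Dset_subset_add2 x : {subset Dset G x <= Dset G x.+2}.
Proof.
move=> s; rewrite !mem_Dset => /and3P [le_s Gs Gxs].
have -> : x.+2 - s = x - s + 2 by lia.
by rewrite Gs G_add // !leqW.
Qed.

Lemma size_union_Dset_add2 x :
  size (undup (Dset G x ++ Dset G x.+2)) = size (Dset G x.+2).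
Proof.
apply/perm_size/uniq_perm; rewrite ?undup_uniq ?Dset_uniq // => s.
by rewrite mem_undup mem_cat orb_idl // => /Dset_subset_add2.
Qed.

Lemma Dset_add2_subset m :
  {subset Dset G m.+2 <= m.+2 :: rem m.+1 (undup (Dset G m ++ Dset G m.+1))}.
Proof.
move=> s; rewrite mem_Dset inE mem_rem_uniq ?undup_uniq // inE.
rewrite mem_undup mem_cat !mem_Dset => /and3P [le_s Gs G_m2s].
have [-> // | ne_s /=] := eqVneq s m.+2.
have ne_s1 : s != m.+1.
  by apply: contraNneq notG1 => eq_s; rewrite eq_s subSS subSn // subnn in G_m2s.
have le_sm : s <= m by lia.
rewrite ne_s1 Gs le_sm leqW //=.
by case: (boolP (odd (m - s))) => odd_ms;
  [rewrite orbC|]; rewrite G_even //; lia.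
Qed.

Lemma leq_size_Dset_add2 m : G m.+1 ->
  size (Dset G m.+2) <= size (undup (Dset G m ++ Dset G m.+1)).
Proof.
move=> Gm1; set U := undup _.
have U_m1 : m.+1 \in U.
  by rewrite mem_undup mem_cat (mem_Dset _ m.+1) leqnn Gm1 subnn G0 orbT.
have U_gt0 : 0 < size U by rewrite lt0n size_eq0; apply: contraTneq U_m1 => ->.
have := uniq_leq_size (Dset_uniq G m.+2) (@Dset_add2_subset m).
by rewrite /= size_rem // prednK.
Qed.

Theorem delta1_add2 m : (forall x, m <= x -> G x) ->
  delta1 G m.+2 = delta2 G m.
Proof.
move=> G_ge_m; rewrite /delta1 /delta2; apply: natmin_eq.
- move=> _ [[|[|x]] [// le_x [Gx <-]]].
  exists (size (undup (Dset G x ++ Dset G x.+2))).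
    by exists x, x.+2; do !split => //; apply: G_ge_m.
  by rewrite size_union_Dset_add2.
- move=> _ [m1 [m2 [le_m1 [lt_m12 [_ [Gm2 <-]]]]]].
  case: (leqP m.+2 m2) => [le_m2 | lt_m2].
    exists (size (Dset G m2)); first by exists m2.
    apply: uniq_leq_size (Dset_uniq G m2) _ => s s_m2.
    by rewrite mem_undup mem_cat s_m2 orbT.
  have [-> eq_m2] : m1 = m /\ m2 = m.+1 by lia.
  rewrite eq_m2 in Gm2 *.
  exists (size (Dset G m.+2)).
    by exists m.+2; do !split => //; apply: G_ge_m; lia.
  exact: leq_size_Dset_add2 Gm2.
Qed.

End SemigroupWithTwo.

Lemma inGammaE g x : inGamma g x = ~~ odd x || (2 * g + 1 <= x).
Proof.
apply/existsP/idP => [[a /existsP [b /eqP ->]] | Gx].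
  by case: (posnP b) => [-> | b_gt0]; nia.
case: (boolP (odd x)) Gx => [odd_x /= ge_x | even_x _].
  exists (inord ((x - (2 * g + 1))./2)); apply/existsP; exists (inord 1).
  by rewrite !inordK; lia.
exists (inord x./2); apply/existsP; exists (inord 0).
by rewrite !inordK; lia.
Qed.

Theorem lemma5p1 (g : nat) (hg : 0 < g) (k : nat) :
  delta1 (inGamma g) (2 * g + 2 + k) = delta2 (inGamma g) (2 * g + k).
Proof.
rewrite addnAC addn2; apply: delta1_add2 => [||| x y | x le_x];
  rewrite ?inGammaE; lia.
Qed.
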